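(* For every graph $G$, $\pi_{T_w}(G)\le \min\{\pi(G),\pi'(G)\}+1$.
   Context: Graphs are finite and simple. A sequence is nonrepetitive if no block of consecutive terms has the form $r_1\dots r_nr_1\dots r_n$ with $n\ge1$. A vertex-colouring of $G$ is nonrepetitive if for every path $v_1,\dots,v_k$ of $G$ the colour sequence of its vertices is nonrepetitive; $\pi(G)$ (Thue chromatic number) is the minimum number of colours in such a colouring. Analogously an edge-colouring is nonrepetitive if the colour sequence of the edges of every path is nonrepetitive, and $\pi'(G)$ (Thue chromatic index) is the minimum number of colours in such a colouring. A weak total Thue colouring of $G$ is a colouring of $V(G)\cup E(G)$ such that for every path $v_1,e_1,v_2,\dots,e_{k-1},v_k$ in $G$ the sequence of colours of $v_1,e_1,v_2,e_2,\dots,v_k$ is nonrepetitive; $\pi_{T_w}(G)$ (weak total Thue chromatic number) is the minimum number of colours in such a colouring. *)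

From Stdlib Require Import ClassicalEpsilon.
From mathcomp Require Import all_boot zify.
Set Implicit Arguments. Unset Strict Implicit. Unset Printing Implicit Defensive.

(* A graph is a finite type T of vertices with a symmetric irreflexive
   adjacency relation e.  A path v_1,...,v_k (k >= 1) is represented by its
   head x = v_1 and tail p = [v_2;...;v_k], with [path e x p] (consecutive
   vertices adjacent) and [uniq (x :: p)] (vertices distinct). *)

Definition nonrep (A : Type) (s : seq A) : Prop :=
  ~ exists a r c, 0 < size r /\ s = a ++ r ++ r ++ c.

Definition nr_vcol (T : finType) (e : rel T) (k : nat) (c : T -> nat) : Prop :=
  (forall x, c x < k) /\
  (forall x p, path e x p -> uniq (x :: p) -> nonrep (map c (x :: p))).

(* Edge colouring: c x y is the colour of the edge xy (only meaningful when
   e x y; it must not depend on the orientation). The edge-colour sequence of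
   the path x :: p is pairmap c x p. *)
Definition nr_ecol (T : finType) (e : rel T) (k : nat) (c : T -> T -> nat) : Prop :=
  (forall x y, e x y -> c x y < k) /\
  (forall x y, e x y -> c x y = c y x) /\
  (forall x p, path e x p -> uniq (x :: p) -> nonrep (pairmap c x p)).

Fixpoint tseq (T : Type) (cv : T -> nat) (ce : T -> T -> nat) (x : T) (p : seq T)
  : seq nat :=
  match p with
  | [::] => [:: cv x]
  | y :: p' => cv x :: ce x y :: tseq cv ce y p'
  end.

Definition nr_tcol (T : finType) (e : rel T) (k : nat)
    (cv : T -> nat) (ce : T -> T -> nat) : Prop :=
  (forall x, cv x < k) /\
  (forall x y, e x y -> ce x y < k) /\
  (forall x y, e x y -> ce x y = ce y x) /\
  (forall x p, path e x p -> uniq (x :: p) -> nonrep (tseq cv ce x p)).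

Definition classb (P : Prop) : bool :=
  if excluded_middle_informative P then true else false.

Lemma classbP (P : Prop) : classb P <-> P.
Proof. by rewrite /classb; case: excluded_middle_informative. Qed.

Definition has_vcol (T : finType) (e : rel T) (k : nat) : bool :=
  classb (exists c, nr_vcol e k c).
Definition has_ecol (T : finType) (e : rel T) (k : nat) : bool :=
  classb (exists c, nr_ecol e k c).
Definition has_tcol (T : finType) (e : rel T) (k : nat) : bool :=
  classb (exists cv ce, nr_tcol e k cv ce).

Section Existence.
Variable T : finType.

Definition code (S : {set T}) : nat := enum_rank S.

Lemma code_inj : injective code.
Proof. by move=> S S' /val_inj/enum_rank_inj. Qed.

Lemma code_lt S : code S < #|{set T}|.
Proof. exact: ltn_ord. Qed.

Lemma uniq_nonrep (A : eqType) (s : seq A) : uniq s -> nonrep s.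
Proof.
move=> u [a [[|x r] [c [//= _ hs]]]].
have := count_uniq_mem x u; rewrite hs !count_cat /= !count_cat /= eqxx.
case: (x \in _) => /=; lia.
Qed.

Lemma tseq_sub (cv : T -> nat) (ce : T -> T -> nat)
  (hv : forall u, exists S : {set T}, cv u = code S /\ S \subset [set u])
  (he : forall u v, exists S : {set T}, ce u v = code S /\ S \subset [set u; v])
  x p z : z \in tseq cv ce x p ->
  exists S : {set T}, z = code S /\ forall w, w \in S -> w \in x :: p.
Proof.
have sub2 (S : {set T}) u v (q : seq T) : S \subset [set u; v] ->
    u \in q -> v \in q -> forall w, w \in S -> w \in q.
  by move=> /subsetP sS hu hv' w /sS; rewrite !inE => /orP[]/eqP->.
have sub1 (S : {set T}) u (q : seq T) : S \subset [set u] ->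
    u \in q -> forall w, w \in S -> w \in q.
  by move=> /subsetP sS hu w /sS; rewrite !inE => /eqP->.
elim: p x => [|y p IH] x /=.
  rewrite inE => /eqP ->; have [S [-> sS]] := hv x.
  by exists S; split=> //; apply: sub1 sS _; rewrite mem_head.
rewrite !inE => /orP[/eqP ->|/orP[/eqP ->|/IH [S [-> hS]]]].
- have [S [-> sS]] := hv x.
  by exists S; split=> //; apply: sub1 sS _; rewrite mem_head.
- have [S [-> sS]] := he x y.
  by exists S; split=> //; apply: sub2 sS _ _; rewrite !inE eqxx ?orbT.
- by exists S; split=> // w /hS; rewrite !inE => ->; rewrite orbT.
Qed.

Definition tcv (u : T) : nat := code [set u].
Definition tce (u v : T) : nat := code [set u; v].

Lemma tce_sym u v : tce u v = tce v u.
Proof. by rewrite /tce setUC. Qed.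

Lemma tseq_uniq x p : uniq (x :: p) -> uniq (tseq tcv tce x p).
Proof.
have hv u : exists S : {set T}, tcv u = code S /\ S \subset [set u].
  by exists [set u].
have he u v : exists S : {set T}, tce u v = code S /\ S \subset [set u; v].
  by exists [set u; v].
elim: p x => [|y p IH] x //= /andP[xn u].
rewrite IH // andbT inE negb_or.
have xy : x != y by apply: contraNneq xn => ->; rewrite inE eqxx.
have notin (S : {set T}) : (forall w, w \in S -> w \in y :: p) -> x \notin S.
  by move=> hS; apply: contra xn => /hS.
apply/andP; split; [apply/andP; split|].
- apply/negP => /eqP/code_inj/setP/(_ y); rewrite !inE eqxx orbT.
  by rewrite eq_sym (negbTE xy).
- by apply/negP => /(tseq_sub hv he) [S [/code_inj eS /notin]];
     rewrite -eS !inE eqxx.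
- by apply/negP => /(tseq_sub hv he) [S [/code_inj eS /notin]];
     rewrite -eS !inE eqxx.
Qed.

Lemma pairmap_sub (f : T -> T -> nat) x p z : z \in pairmap f x p ->
  exists u v, z = f u v /\ u \in x :: p /\ v \in x :: p.
Proof.
elim: p x => [|y p IH] x //=; rewrite inE => /orP[/eqP ->|/IH [u [v [-> [hu hv]]]]].
  by exists x, y; rewrite !inE !eqxx ?orbT.
by exists u, v; split=> //; split; rewrite inE ?hu ?hv orbT.
Qed.

Lemma pairmap_uniq x p : uniq (x :: p) -> uniq (pairmap tce x p).
Proof.
elim: p x => [|y p IH] x //= /andP[xn u]; rewrite IH // andbT.
apply/negP => /pairmap_sub [a [b [/code_inj /setP /(_ x)]]].
rewrite !inE eqxx /= => /esym /orP[] /eqP <- [ha hb].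
- by move: xn ha; rewrite !inE => /negbTE ->.
- by move: xn hb; rewrite !inE => /negbTE ->.
Qed.

Variable e : rel T.

Lemma ex_tcol : exists k, has_tcol e k.
Proof.
exists #|{set T}|; apply/classbP; exists tcv, tce.
split; [by move=> x; apply: code_lt|split; [by move=> x y _; apply: code_lt|]].
split; [by move=> x y _; apply: tce_sym|].
by move=> x p _ u; apply/uniq_nonrep/tseq_uniq.
Qed.

Lemma ex_ecol : exists k, has_ecol e k.
Proof.
exists #|{set T}|; apply/classbP; exists tce.
split; [by move=> x y _; apply: code_lt|split; [by move=> x y _; apply: tce_sym|]].
by move=> x p _ u; apply/uniq_nonrep/pairmap_uniq.
Qed.

Lemma ex_vcol : exists k, has_vcol e k.
Proof.
exists #|{set T}|; apply/classbP; exists tcv.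
split; [by move=> x; apply: code_lt|].
move=> x p _ u; apply/uniq_nonrep; rewrite map_inj_uniq //.
by move=> a b /code_inj /set1_inj.
Qed.
End Existence.

Definition thue_number (T : finType) (e : rel T) : nat := ex_minn (ex_vcol e).
Definition thue_index (T : finType) (e : rel T) : nat := ex_minn (ex_ecol e).
Definition weak_total_thue_number (T : finType) (e : rel T) : nat :=
  ex_minn (ex_tcol e).

(* Give every edge (resp. every vertex) one fresh colour k on top of a
   nonrepetitive vertex (resp. edge) colouring.  The total colour sequence of
   a path is then, up to a k at each end, the sequence of old colours with k
   inserted between consecutive terms.  Erasing k from a square r r in it
   leaves a square in the old sequence, and the erased block is nonempty
   because no two consecutive terms of the new sequence both equal k. *)

From mathcomp Require Import all_boot.

Set Implicit Arguments.
Unset Strict Implicit.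
Unset Printing Implicit Defensive.

Lemma nonrep_infix (A : Type) (u s w : seq A) : nonrep (u ++ s ++ w) -> nonrep s.
Proof.
move=> nr [a [r [c [r_gt0 def_s]]]]; apply: nr.
by exists (u ++ a), r, (c ++ w); rewrite def_s -!catA.
Qed.

Fixpoint fence (A : Type) (k : A) (s : seq A) : seq A :=
  if s is a :: s' then k :: a :: fence k s' else [:: k].

Section Fence.
Variables (A : eqType) (k : A).

Lemma filter_fence s : k \notin s -> filter (predC1 k) (fence k s) = s.
Proof.
elim: s => [|a s IHs] /=; first by rewrite eqxx.
by rewrite inE negb_or eqxx eq_sym => /andP[-> /IHs ->].
Qed.

Lemma sorted_fence s :
  k \notin s -> sorted (fun a b => (a != k) || (b != k)) (fence k s).
Proof.
elim: s => [|a s IHs] //=; rewrite inE negb_or eq_sym => /andP[ak ks].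
by rewrite ak orbT path_min_sorted ?IHs //; apply/allP => b _; rewrite ak.
Qed.

Lemma nonrep_fence s : k \notin s -> nonrep s -> nonrep (fence k s).
Proof.
move=> ks nr [u [r [w [r_gt0 def_t]]]].
have r_ne_k : 0 < size (filter (predC1 k) r).
  rewrite lt0n size_eq0; apply/negP => /eqP r_k.
  have /all_pred1P def_r : all (pred1 k) r.
    apply/allP => x xr; apply/negPn/negP => xk.
    have : x \in filter (predC1 k) r by rewrite mem_filter xr andbT.
    by rewrite r_k.
  have := sorted_fence ks; rewrite def_t [r ++ _]catA => no_kk.
  have := infix_sorted (infix_infix u (r ++ r) w) no_kk.
  by rewrite def_r; case: (size r) r_gt0 => //= n _; case: n => /=; rewrite eqxx.
apply: nr; exists (filter (predC1 k) u), (filter (predC1 k) r), (filter (predC1 k) w).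
by rewrite -(filter_fence ks) def_t !filter_cat.
Qed.

End Fence.

Lemma notin_all_ltn (s : seq nat) k : all (fun z => z < k) s -> k \notin s.
Proof. by move=> /allP s_lt; apply/negP => /s_lt; rewrite ltnn. Qed.

Lemma all_pairmap_path (T A : Type) (e : rel T) (f : T -> T -> A) (P : pred A) x p :
  (forall a b, e a b -> P (f a b)) -> path e x p -> all P (pairmap f x p).
Proof.
move=> fP; elim: p x => [|y p IHp] x //= /andP[exy pth].
by rewrite fP // IHp.
Qed.

Lemma fence_map_tseq (T : Type) (cv : T -> nat) k x p :
  fence k (map cv (x :: p)) = [:: k] ++ tseq cv (fun _ _ => k) x p ++ [:: k].
Proof. by elim: p x => [|y p IHp] x //=; have /= -> := IHp y. Qed.

Lemma tseq_fence_pairmap (T : Type) (ce : T -> T -> nat) k x p :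
  tseq (fun _ => k) ce x p = fence k (pairmap ce x p).
Proof. by elim: p x => [|y p IHp] x //=; rewrite IHp. Qed.

Section ExtraColour.
Variables (T : finType) (e : rel T) (k : nat).

Lemma nr_vcol_tcol c : nr_vcol e k c -> nr_tcol e k.+1 c (fun _ _ => k).
Proof.
move=> [c_lt nr_c]; split; first by move=> x; rewrite ltnS ltnW.
do 2!split=> //; move=> x p pth uniq_p.
apply: (@nonrep_infix _ [:: k] _ [:: k]); rewrite -fence_map_tseq.
apply: nonrep_fence (nr_c x p pth uniq_p).
by apply: notin_all_ltn; apply/allP => _ /mapP[y _ ->].
Qed.

Lemma nr_ecol_tcol c : nr_ecol e k c -> nr_tcol e k.+1 (fun _ => k) c.
Proof.
move=> [c_lt [c_sym nr_c]]; split=> //.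
split; first by move=> x y /c_lt; rewrite ltnS => /ltnW.
split=> // x p pth uniq_p; rewrite tseq_fence_pairmap.
apply: nonrep_fence (nr_c x p pth uniq_p).
exact/notin_all_ltn/(all_pairmap_path c_lt).
Qed.

End ExtraColour.

Theorem mainTheorem2 (T : finType) (e : rel T)
  (e_sym : symmetric e) (e_irr : irreflexive e) :
  weak_total_thue_number e <= minn (thue_number e) (thue_index e) + 1.
Proof.
have tcol_le k : has_tcol e k -> weak_total_thue_number e <= k.
  by move=> tcol_k; rewrite /weak_total_thue_number; case: ex_minnP => m _ /(_ k tcol_k).
rewrite addn_minl leq_min !addn1; apply/andP; split; apply/tcol_le/classbP.
- rewrite /thue_number; case: ex_minnP => m /classbP[c c_nr] _.
  by exists c, (fun _ _ => m); apply: nr_vcol_tcol.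
- rewrite /thue_index; case: ex_minnP => m /classbP[c c_nr] _.
  by exists (fun _ => m), c; apply: nr_ecol_tcol.
Qed.
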